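(* Let $x,x',\ldots,x^{(r)}$ be $m$-tuples of indeterminates and let $f\in R[x,x',\ldots,x^{(r)}]^\wedge$. Define $f_*:R^m\to R$ by $f_*(a)=f(a,\delta a,\ldots,\delta^r a)$. If $f_*$ vanishes on a product of (nonempty) open balls in $R^m$, then $f_*(a)=0$ for all $a\in R^m$.
   Context: Let $p$ be an odd prime, $R$ the unique complete discrete valuation ring with maximal ideal $pR$ and residue field an algebraic closure of $\mathbb F_p$, with the $p$-adic metric; open balls are the sets $b+p^NR$. $\phi$ is the unique lift of Frobenius on $R$, $\delta a=(\phi(a)-a^p)/p$, applied componentwise on $R^m$. $\wedge$ denotes $p$-adic completion. *)

From mathcomp Require Import all_boot all_order all_algebra.
Set Implicit Arguments. Unset Strict Implicit. Unset Printing Implicit Defensive.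
Import Order.TTheory GRing.Theory Num.Theory.
Local Open Scope ring_scope.

Definition in_pow_ideal (R : comNzRingType) (p k : nat) (x : R) : Prop :=
  exists c : R, x = (p%:R) ^+ k * c.

(* R is (a model of) the unique complete DVR with maximal ideal pR and
   residue field an algebraic closure of F_p.  *)
Definition witt_ring (p : nat) (R : idomainType) : Prop :=
  (p%:R != 0 :> R) /\
  (~~ ((p%:R : R) \is a GRing.unit)) /\
  (forall a : R, a != 0 -> exists n : nat, exists u : R,
       u \is a GRing.unit /\ a = (p%:R) ^+ n * u) /\
  (forall u : nat -> R,
      (forall k, exists n0, forall n, (n0 <= n)%N -> in_pow_ideal p k (u n - u n0)) ->
      exists l : R, forall k, exists n0, forall n, (n0 <= n)%N ->
          in_pow_ideal p k (u n - l)) /\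
  (forall P : {poly R}, P \is monic -> (1 < size P)%N ->
      exists x : R, in_pow_ideal p 1 P.[x]) /\
  (* residue field is algebraic over F_p *)
  (forall a : R, exists n : nat, (0 < n)%N /\ in_pow_ideal p 1 (a ^+ (p ^ n) - a)).

Definition frob_lift (p : nat) (R : idomainType) (phi : {rmorphism R -> R}) :
  Prop := forall a : R, in_pow_ideal p 1 (phi a - a ^+ p).

(* delta a = (phi a - a^p)/p  (well-defined since R is a domain). *)
Definition is_delta (p : nat) (R : idomainType) (phi : R -> R) (delta : R -> R) :
  Prop := forall a : R, (p%:R) * delta a = phi a - a ^+ p.

Definition monom (r m : nat) := {ffun 'I_r.+1 * 'I_m -> nat}.

(* Elements of the p-adic completion R[x,x',...,x^{(r)}]^: coefficient
   families tending to 0 p-adically. *)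
Definition restricted (p : nat) (R : idomainType) (r m : nat)
  (f : monom r m -> R) : Prop :=
  forall k : nat, exists s : seq (monom r m),
    forall al, al \notin s -> in_pow_ideal p k (f al).

Definition monom_eval (R : idomainType) (r m : nat) (al : monom r m)
  (b : 'I_r.+1 * 'I_m -> R) : R :=
  \prod_(v : 'I_r.+1 * 'I_m) b v ^+ al v.

(* f(b) = v : the series sum_al f_al b^al converges p-adically
   (unconditionally) to v. *)
Definition eval_to (p : nat) (R : idomainType) (r m : nat)
  (f : monom r m -> R) (b : 'I_r.+1 * 'I_m -> R) (v : R) : Prop :=
  forall k : nat, exists s : seq (monom r m),
    forall t : seq (monom r m), uniq t -> {subset s <= t} ->
      in_pow_ideal p k (v - \sum_(al <- t) f al * monom_eval al b).

Definition jet (R : idomainType) (r m : nat) (delta : R -> R) (a : 'I_m -> R) :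
  'I_r.+1 * 'I_m -> R := fun v => iter v.1 delta (a v.2).

From mathcomp Require Import all_boot all_order all_algebra.
From mathcomp Require Import ring zify.
From mathcomp Require Import mpoly.
From Stdlib Require Import IndefiniteDescription.

(* Write a point of the ball as [a = b + p^N c].  Iterating
   [Q |-> (Q^phi(X^p + p X') - Q^p) / p] expresses each [delta^j a_i] as a
   polynomial [T] in the jet [(c, delta c, ..., delta^r c)], equal to
   [delta^j b_i + p^N (c_i^(j) + linear terms of lower level)] plus terms of
   degree [>= 2].  So every truncation [F_K] of [f] satisfies
   [F_K (T (jet c)) = 0 mod p^K].  Since the residue field is algebraically
   closed, jets are dense modulo [p] and a polynomial vanishing modulo [p^K] on
   all jets has all its coefficients in [p^K R]; hence [F_K o T] vanishes
   modulo [p^K] everywhere.  Substituting [p^(N+k) Z], whose image under [T] is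
   [jet b + p^(2N+k) (unitriangular Z + O(p^k))], and inducting on the degree
   shows that the Taylor coefficients of [F_K] at [jet b] of bounded degree lie
   in [p^k R] for [K] large; as [f - F_K] is [p^K]-small, [f_*(a) = 0 mod p^k]
   for every [a] and [k]. *)

Set Implicit Arguments. Unset Strict Implicit. Unset Printing Implicit Defensive.
Import Order.TTheory GRing.Theory Num.Theory.
Local Open Scope ring_scope.

Section PowIdeal.
Variables (p : nat) (S : comNzRingType).
Local Notation pdvd := (@in_pow_ideal S p).
Local Notation P := (p%:R : S).

Lemma pdvd_exp0 x : pdvd 0 x. Proof. by exists x; rewrite expr0 mul1r. Qed.

Lemma pdvd0 k : pdvd k 0. Proof. by exists 0; rewrite mulr0. Qed.

Lemma pdvdD k x y : pdvd k x -> pdvd k y -> pdvd k (x + y).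
Proof. by move=> [a ->] [b ->]; exists (a + b); rewrite mulrDr. Qed.

Lemma pdvdN k x : pdvd k x -> pdvd k (- x).
Proof. by move=> [a ->]; exists (- a); rewrite mulrN. Qed.

Lemma pdvdB k x y : pdvd k x -> pdvd k y -> pdvd k (x - y).
Proof. by move=> hx hy; apply: pdvdD => //; apply: pdvdN. Qed.

Lemma pdvdMl k x y : pdvd k y -> pdvd k (x * y).
Proof. by move=> [a ->]; exists (x * a); rewrite mulrCA. Qed.

Lemma pdvdMr k x y : pdvd k x -> pdvd k (x * y).
Proof. by move=> hx; rewrite mulrC; apply: pdvdMl. Qed.

Lemma pdvdM a b x y : pdvd a x -> pdvd b y -> pdvd (a + b) (x * y).
Proof. by move=> [c ->] [d ->]; exists (c * d); rewrite exprD mulrACA. Qed.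

Lemma pdvdMn k x n : pdvd k x -> pdvd k (x *+ n).
Proof. by move=> h; rewrite -mulr_natr; apply: pdvdMr. Qed.

Lemma pdvd_leq a b x : (a <= b)%N -> pdvd b x -> pdvd a x.
Proof.
by move=> hab [c ->]; exists (P ^+ (b - a) * c); rewrite mulrA -exprD subnKC.
Qed.

Lemma pdvd_p : pdvd 1 P. Proof. by exists 1; rewrite expr1 mulr1. Qed.

Lemma pdvd_expM k y : pdvd k (P ^+ k * y). Proof. by exists y. Qed.

Lemma pdvd_expMl a k y : (a <= k)%N -> pdvd a (P ^+ k * y).
Proof. by move=> h; apply: (pdvd_leq h); apply: pdvd_expM. Qed.

Lemma pdvd_expMX s y k : (0 < k)%N -> pdvd s ((P ^+ s * y) ^+ k).
Proof.
move=> k0; rewrite exprMn -exprM; apply: pdvdMr; rewrite -[P ^+ _]mulr1.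
by apply: pdvd_expMl; rewrite -{1}(muln1 s) leq_mul2l k0 orbT.
Qed.

Lemma pdvd_sum k (I : Type) (s : seq I) (Q : pred I) (F : I -> S) :
  (forall i, Q i -> pdvd k (F i)) -> pdvd k (\sum_(i <- s | Q i) F i).
Proof. by move=> H; apply: (big_ind (pdvd k)); [exact: pdvd0 | exact: pdvdD |]. Qed.

Lemma pdvd_sum_seq k (I : eqType) (s : seq I) (F : I -> S) :
  (forall i, i \in s -> pdvd k (F i)) -> pdvd k (\sum_(i <- s) F i).
Proof. by move=> H; rewrite big_seq; apply: pdvd_sum. Qed.

Lemma eqmodM k a b c d :
  pdvd k (a - b) -> pdvd k (c - d) -> pdvd k (a * c - b * d).
Proof.
move=> h1 h2; have -> : a * c - b * d = a * (c - d) + (a - b) * d by ring.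
by apply: pdvdD; [apply: pdvdMl | apply: pdvdMr].
Qed.

Lemma eqmodX k a b e : pdvd k (a - b) -> pdvd k (a ^+ e - b ^+ e).
Proof.
move=> h; elim: e => [|e IH]; first by rewrite !expr0 subrr; apply: pdvd0.
by rewrite !exprS; apply: eqmodM.
Qed.

Lemma eqmod_prod k (I : Type) (s : seq I) (F G : I -> S) :
  (forall i, pdvd k (F i - G i)) ->
  pdvd k (\prod_(i <- s) F i - \prod_(i <- s) G i).
Proof.
move=> H; elim: s => [|a s IH]; first by rewrite !big_nil subrr; apply: pdvd0.
by rewrite !big_cons; apply: eqmodM.
Qed.

Lemma pdvd_binom s x y e : pdvd s ((x + P ^+ s * y) ^+ e - x ^+ e).
Proof.
case: e => [|e]; first by rewrite !expr0 subrr; apply: pdvd0.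
rewrite exprDn big_ord_recl /= subn0 expr0 mulr1 bin0 mulr1n [X in X - _]addrC addrK.
by apply: pdvd_sum_seq => i _; apply/pdvdMn/pdvdMl/pdvd_expMX.
Qed.

Lemma pdvd_frobD (p_pr : prime p) x y : pdvd 1 ((x + y) ^+ p - x ^+ p - y ^+ p).
Proof.
have p_gt0 : (0 < p)%N by apply: prime_gt0.
rewrite exprDn (bigD1 ord0) //= (bigD1 ord_max) /=; last by rewrite -(inj_eq val_inj) /= -lt0n.
rewrite subn0 expr0 mulr1 bin0 mulr1n subnn expr0 mul1r binn mulr1n.
have -> : forall a b c : S, a + (b + c) - a - b = c by move=> a b c; ring.
apply: pdvd_sum => i /andP [i_neq0 i_neqp].
have hi : (0 < i < p)%N.
  rewrite lt0n ltn_neqAle -ltnS ltn_ord andbT; apply/andP; split.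
    by move: i_neq0; apply: contra => /eqP e; apply/eqP/val_inj.
  by move: i_neqp; apply: contra => /eqP e; apply/eqP/val_inj.
case/dvdnP: (prime_dvd_bin p_pr hi) => q ->.
by rewrite mulrnA -(mulr_natr (_ *+ q) p); apply/pdvdMl/pdvd_p.
Qed.

Lemma pdvd_binomp (p_pr : prime p) s x y :
  (0 < s)%N -> pdvd s.+1 ((x + P ^+ s * y) ^+ p - x ^+ p).
Proof.
move=> s_gt0; rewrite exprDn big_ord_recl /= subn0 expr0 mulr1 bin0 mulr1n.
rewrite [X in X - _]addrC addrK; apply: pdvd_sum_seq => i _.
have [ltip|leip] := ltnP (bump 0 i) p.
- have : (p %| 'C(p, bump 0 i))%N.
    by apply: prime_dvd_bin => //; rewrite /bump /= add1n ltnS leq0n ltip.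
  case/dvdnP => q ->; rewrite mulrnA -(mulr_natr (_ *+ q) p) -[s.+1]addn1.
  by apply: pdvdM; [apply/pdvdMn/pdvdMl/pdvd_expMX | apply: pdvd_p].
- have -> : bump 0 i = p.
    by apply/eqP; rewrite eqn_leq leip andbT /bump /= add1n; have := ltn_ord i.
  rewrite subnn expr0 mul1r binn mulr1n exprMn -exprM.
  apply: pdvdMr; rewrite -[P ^+ _]mulr1; apply: pdvd_expMl.
  by rewrite -{1}(muln1 s) ltn_mul2l s_gt0 prime_gt1.
Qed.

End PowIdeal.

Section MonomialSupport.
Variables (R : comNzRingType) (n : nat).
Implicit Types (A B Q : {mpoly R[n]}) (G : 'X_{1..n} -> Prop).

Definition supp_in G Q := forall m, m \in msupp Q -> G m.

Lemma supp_in0 G : supp_in G 0. Proof. by move=> m; rewrite msupp0. Qed.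

Lemma supp_inD G A B : supp_in G A -> supp_in G B -> supp_in G (A + B).
Proof. by move=> hA hB m /msuppD_le; rewrite mem_cat => /orP[/hA|/hB]. Qed.

Lemma supp_inN G A : supp_in G A -> supp_in G (- A).
Proof. by move=> hA m; rewrite (perm_mem (msuppN A)); apply: hA. Qed.

Lemma supp_inB G A B : supp_in G A -> supp_in G B -> supp_in G (A - B).
Proof. by move=> hA hB; apply: supp_inD => //; apply: supp_inN. Qed.

Lemma supp_inZ G c A : supp_in G A -> supp_in G (c *: A).
Proof. by move=> hA m /msuppZ_le; apply: hA. Qed.

Lemma supp_in_sum G (I : Type) (s : seq I) (F : I -> {mpoly R[n]}) :
  (forall i, supp_in G (F i)) -> supp_in G (\sum_(i <- s) F i).
Proof.
by move=> H; apply: (big_ind (supp_in G)); [exact: supp_in0 | exact: supp_inD |].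
Qed.

Lemma supp_inX G m : G m -> supp_in G 'X_[m].
Proof. by move=> h m'; rewrite msuppX inE => /eqP ->. Qed.

Lemma supp_inC G c : G 0%MM -> supp_in G c%:MP.
Proof. by move=> h m; rewrite msuppC; case: (c == 0) => //; rewrite inE => /eqP ->. Qed.

Lemma supp_inM G1 G2 G3 A B :
  (forall a b, G1 a -> G2 b -> G3 (a + b)%MM) ->
  supp_in G1 A -> supp_in G2 B -> supp_in G3 (A * B).
Proof.
move=> HG hA hB m /msuppM_le /allpairsP [[a b] [ha hb ->]] /=.
by apply: HG; [apply: hA | apply: hB].
Qed.

Lemma supp_in_map G (f : {rmorphism R -> R}) A :
  supp_in G A -> supp_in G (map_mpoly f A).
Proof.
move=> hA m; rewrite mcoeff_msupp mcoeff_map_mpoly => h; apply: hA.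
by rewrite mcoeff_msupp; apply: contra_neq h => ->; apply: rmorph0.
Qed.

Definition mdeg_ge d := supp_in (fun m => (d <= mdeg m)%N).

Lemma mdeg_ge_leq d d' A : (d' <= d)%N -> mdeg_ge d A -> mdeg_ge d' A.
Proof. by move=> h hA m /hA; apply: leq_trans. Qed.

Lemma mdeg_geM a b A B : mdeg_ge a A -> mdeg_ge b B -> mdeg_ge (a + b) (A * B).
Proof. by apply: supp_inM => x y hx hy; rewrite mdegD leq_add. Qed.

Lemma mdeg_geX a A e : mdeg_ge a A -> mdeg_ge (a * e) (A ^+ e).
Proof.
move=> h; elim: e => [|e IH]; first by rewrite muln0.
by rewrite exprS mulnS; apply: mdeg_geM.
Qed.

Lemma mdeg_ge_prod (I : Type) (s : seq I) (a : I -> nat) (F : I -> {mpoly R[n]}) :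
  (forall i, mdeg_ge (a i) (F i)) ->
  mdeg_ge (\sum_(i <- s) a i) (\prod_(i <- s) F i).
Proof.
move=> H; elim: s => [|x s IH]; first by rewrite big_nil.
by rewrite !big_cons; apply: mdeg_geM.
Qed.

Lemma mdeg_geXU k : mdeg_ge 1 ('X_k : {mpoly R[n]}).
Proof. by apply: supp_inX; rewrite mdeg1. Qed.

Lemma mdeg_ge_comp d A (U : n.-tuple {mpoly R[n]}) :
  mdeg_ge d A -> (forall i, mdeg_ge 1 (tnth U i)) -> mdeg_ge d (A \mPo U).
Proof.
move=> hA hU; rewrite comp_mpolyEX; apply: supp_in_sum => m.
have [hm|hm] := boolP (m \in msupp A); last first.
  by rewrite (memN_msupp_eq0 hm) scale0r; apply: supp_in0.
apply: supp_inZ; rewrite comp_mpolyX.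
have h : mdeg_ge (\sum_(i < n) m i) (\prod_(i < n) tnth U i ^+ m i).
  by apply: mdeg_ge_prod => i; have := mdeg_geX (e := m i) (hU i); rewrite mul1n.
by apply: (mdeg_ge_leq _ h); rewrite -mdegE; exact: hA.
Qed.

Definition mdeg_le d := supp_in (fun m => (mdeg m <= d)%N).

Lemma mdeg_leM a b A B : mdeg_le a A -> mdeg_le b B -> mdeg_le (a + b) (A * B).
Proof. by apply: supp_inM => x y hx hy; rewrite mdegD leq_add. Qed.

Lemma mdeg_le1 : mdeg_le 0 (1 : {mpoly R[n]}).
Proof. by rewrite -mpolyC1; apply: supp_inC; rewrite mdeg0. Qed.

Lemma mdeg_leX a A e : mdeg_le a A -> mdeg_le (a * e) (A ^+ e).
Proof.
move=> h; elim: e => [|e IH]; first by rewrite muln0 expr0; apply: mdeg_le1.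
by rewrite exprS mulnS; apply: mdeg_leM.
Qed.

Lemma mdeg_le_prod (I : Type) (s : seq I) (a : I -> nat) (F : I -> {mpoly R[n]}) :
  (forall i, mdeg_le (a i) (F i)) ->
  mdeg_le (\sum_(i <- s) a i) (\prod_(i <- s) F i).
Proof.
move=> H; elim: s => [|x s IH]; first by rewrite !big_nil; apply: mdeg_le1.
by rewrite !big_cons; apply: mdeg_leM.
Qed.

Lemma prod_expM (p t : nat) (Z : 'I_n -> R) (m : 'X_{1..n}) :
  \prod_i (p%:R ^+ t * Z i) ^+ m i = p%:R ^+ (t * mdeg m) * \prod_i Z i ^+ m i.
Proof.
rewrite mdegE; under eq_bigr do rewrite exprMn.
by rewrite big_split /= prodrXr exprM.
Qed.

Lemma mdeg_ge_meval p d A (t : nat) (Z : 'I_n -> R) :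
  mdeg_ge d A -> in_pow_ideal p (t * d) (A.@[fun i => p%:R ^+ t * Z i]).
Proof.
move=> hA; rewrite mevalE; apply: pdvd_sum_seq => m hm; apply: pdvdMl.
by rewrite prod_expM; apply: pdvd_expMl; rewrite leq_mul2l (hA _ hm) orbT.
Qed.

Lemma mdeg_ge_binom (c : R) (W : {mpoly R[n]}) e : mdeg_ge 1 W ->
  mdeg_ge 2 ((c%:MP + W) ^+ e - (c ^+ e)%:MP - (c ^+ e.-1 *+ e)%:MP * W).
Proof.
move=> hW; elim: e => [|e IH].
  by rewrite !expr0 mulr0n rmorph0 mul0r subr0 mpolyC1 subrr; apply: supp_in0.
have -> : (c%:MP + W) ^+ e.+1 - (c ^+ e.+1)%:MP - (c ^+ e.+1.-1 *+ e.+1)%:MP * W =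
    ((c%:MP + W) ^+ e - (c ^+ e)%:MP - (c ^+ e.-1 *+ e)%:MP * W) * (c%:MP + W)
    + (c ^+ e.-1 *+ e)%:MP * (W * W).
  case: e {IH} => [|e] /=; rewrite !rmorphMn /= !rmorphXn /=; first by ring.
  by rewrite !exprS !mulrS; ring.
apply: supp_inD; first by rewrite -[2%N]/(2 + 0)%N; apply: mdeg_geM.
by rewrite -[2%N]/(0 + (1 + 1))%N; apply/mdeg_geM/mdeg_geM.
Qed.

Lemma mcoeff_sumX (T : Type) (s : seq T) (c : T -> R) (g : T -> 'X_{1..n})
    (Q : pred T) m :
  (\sum_(x <- s | Q x) c x *: ('X_[g x] : {mpoly R[n]}))@_m =
  \sum_(x <- s | Q x && (g x == m)) c x.
Proof.
rewrite raddf_sum /= big_mkcondr /=; apply: eq_bigr => x _.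
by rewrite mcoeffZ mcoeffX; case: (g x == m); rewrite ?mulr1 ?mulr0.
Qed.

Lemma eqmod_meval p k Q (y W : 'I_n -> R) :
  (forall i, in_pow_ideal p k (y i - W i)) -> in_pow_ideal p k (Q.@[y] - Q.@[W]).
Proof.
move=> H; rewrite !mevalE -sumrB; apply: pdvd_sum_seq => m _.
by rewrite -mulrBr; apply/pdvdMl/eqmod_prod => i; apply: eqmodX.
Qed.

End MonomialSupport.

Section MpolySlice.
Variables (R : comNzRingType) (n : nat).
Implicit Types (Q : {mpoly R[n]}) (W : 'I_n -> R).

Definition mnm_clear (j : 'I_n) (m : 'X_{1..n}) : 'X_{1..n} :=
  [multinom (if i == j then 0 else m i)%N | i < n].

Definition mslice (j : 'I_n) (d : nat) Q : {mpoly R[n]} :=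
  \sum_(m <- msupp Q | m j == d) Q@_m *: 'X_[mnm_clear j m].

Lemma mnm_clear_inj j (m1 m2 : 'X_{1..n}) :
  m1 j = m2 j -> mnm_clear j m1 = mnm_clear j m2 -> m1 = m2.
Proof.
move=> e1 /mnmP e2; apply/mnmP => i; have := e2 i; rewrite !mnmE.
by case: (eqVneq i j) => [->|].
Qed.

Lemma mslice_coef Q j m : (mslice j (m j) Q)@_(mnm_clear j m) = Q@_m.
Proof.
rewrite /mslice mcoeff_sumX.
have [hm|hm] := boolP (m \in msupp Q).
  rewrite big_mkcond (bigD1_seq m) //= !eqxx /= big1 ?addr0 // => m' hne.
  case: ifP => // /andP[e1 /eqP e2].
  by move: hne; rewrite (mnm_clear_inj (eqP e1) e2) eqxx.
rewrite big1_seq ?(memN_msupp_eq0 hm) // => m' /andP[/andP[e1 /eqP e2] hm'].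
by move: hm; rewrite -(mnm_clear_inj (eqP e1) e2) hm'.
Qed.

Lemma prod_mnm_clear j (m : 'X_{1..n}) W :
  \prod_i W i ^+ m i = W j ^+ m j * \prod_i W i ^+ mnm_clear j m i.
Proof.
rewrite (bigD1 j) //= [in RHS](bigD1 j) //= mnmE eqxx expr0 mul1r; congr (_ * _).
by apply: eq_bigr => i hi; rewrite mnmE (negbTE hi).
Qed.

Lemma mslice_meval Q j W D : (msize Q <= D)%N ->
  Q.@[W] = \sum_(d < D) (mslice j d Q).@[W] * W j ^+ d.
Proof.
move=> hD; rewrite mevalE.
have -> : \sum_(m <- msupp Q) Q@_m * \prod_i W i ^+ m i =
    \sum_(m <- msupp Q) \sum_(d < D)
      (if m j == d then Q@_m * \prod_i W i ^+ m i else 0).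
  apply: eq_big_seq => m hm.
  have hmj : (m j < D)%N.
    apply: (leq_ltn_trans _ (leq_trans (msize_mdeg_lt hm) hD)).
    by rewrite mdegE (bigD1 j) //= leq_addr.
  by rewrite -big_mkcond (big_pred1 (Ordinal hmj)) // => d; rewrite eq_sym.
rewrite exchange_big /=; apply: eq_bigr => d _.
rewrite /mslice raddf_sum /= mulr_suml [RHS]big_mkcond /=.
apply: eq_bigr => m _; case: eqP => [hd|//].
by rewrite mevalZ mevalX (prod_mnm_clear j m) hd; ring.
Qed.

Lemma mslice_meval_set Q j d W z :
  (mslice j d Q).@[W] = (mslice j d Q).@[fun i => if i == j then z else W i].
Proof.
rewrite /mslice !raddf_sum /=; apply: eq_bigr => m _.
rewrite !mevalZ !mevalX; congr (_ * _); apply: eq_bigr => i _.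
by rewrite mnmE; case: (eqVneq i j).
Qed.

Definition vars_below (J : nat) : {mpoly R[n]} -> Prop := supp_in (fun m : 'X_{1..n} =>
  forall i : 'I_n, (J <= i)%N -> m i = 0%N).

Lemma mslice_vars_below J Q j d :
  vars_below J.+1 Q -> nat_of_ord j = J -> vars_below J (mslice j d Q).
Proof.
move=> hQ hj m /msupp_sum_le /flattenP [s /mapP [m' hm' ->] hm] i hi.
rewrite mem_filter in hm'; case/andP: hm' => _ hm'.
have := msuppZ_le hm; rewrite msuppX inE => /eqP ->.
rewrite mnmE; case: (eqVneq i j) => // hij.
apply: hQ => //; rewrite ltn_neqAle hi andbT; apply/negP => /eqP e.
by move/eqP: hij; apply; apply: val_inj; rewrite /= hj -e.
Qed.

Lemma vars_below0_supp Q m : vars_below 0 Q -> m \in msupp Q -> m = 0%MM.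
Proof. by move=> hv hm; apply/mnmP => i; rewrite mnmE; apply: hv. Qed.

Lemma vars_below0_meval Q : vars_below 0 Q -> Q.@[fun _ => 0] = Q@_0%MM.
Proof.
move=> hv; rewrite mevalE; have [hm|hm] := boolP (0%MM \in msupp Q); last first.
  rewrite (memN_msupp_eq0 hm) big1_seq // => x /andP [_ hx].
  by move: hm; rewrite -(vars_below0_supp hv hx) hx.
have e : perm_eq (msupp Q) [:: 0%MM].
  by apply: uniq_perm => // x; rewrite inE; apply/idP/eqP => [/(vars_below0_supp hv)|->].
by rewrite (perm_big _ e) big_seq1 big1 ?mulr1 // => i _; rewrite mnmE.
Qed.

End MpolySlice.

Section CompleteDVR.
Variables (p : nat) (R : idomainType).
Hypothesis R_witt : witt_ring p R.

Local Notation pdvd := (@in_pow_ideal R p).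
Local Notation P := (p%:R : R).

Lemma p_neq0 : P != 0. Proof. by case: R_witt. Qed.

Lemma p_nonunit : ~~ (P \is a GRing.unit). Proof. by case: R_witt => _ []. Qed.

Lemma pdvd_cancel a b x : pdvd (a + b) (P ^+ a * x) -> pdvd b x.
Proof.
move=> [c]; rewrite exprD -mulrA => /(mulfI (expf_neq0 a p_neq0)) ->.
by exists c.
Qed.

Lemma pdvd_cancel1 b x : pdvd b.+1 (P * x) -> pdvd b x.
Proof. by move=> h; apply: (@pdvd_cancel 1); rewrite expr1 add1n. Qed.

Lemma unit_of_npdvd1 x : ~ pdvd 1 x -> x \is a GRing.unit.
Proof.
move=> h; have nz : x != 0 by apply/eqP => e; apply: h; rewrite e; apply: pdvd0.
case: R_witt => _ [_ [dec _]]; have [[|n] [u [uU ex]]] := dec x nz.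
  by rewrite ex expr0 mul1r.
by exfalso; apply: h; rewrite ex; apply: pdvd_expMl.
Qed.

Lemma pdvd1_prime x y : pdvd 1 (x * y) -> ~ pdvd 1 x -> pdvd 1 y.
Proof.
move=> hxy /unit_of_npdvd1 xU.
by rewrite -(mulKr xU y); apply: pdvdMl.
Qed.

Lemma npdvd1_1 : ~ pdvd 1 (1 : R).
Proof.
move=> [c]; rewrite expr1 => e; move: p_nonunit.
by have -> : P \is a GRing.unit by apply/unitrPr; exists c; rewrite -e.
Qed.

Lemma residue_root k w : (0 < k)%N -> exists e, pdvd 1 (e ^+ k - w).
Proof.
move=> k_gt0; case: R_witt => _ [_ [_ [_ [res_closed _]]]].
have sz : (1 < size ('X^k - w%:P : {poly R})%R)%N by rewrite size_XnsubC.
have [e he] := res_closed ('X^k - w%:P) (monicXnsubC w k_gt0) sz.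
by exists e; move: he; rewrite !hornerE.
Qed.

(* A root of [X * prod (X - x) + 1] avoids every residue class of [s]. *)
Lemma residue_avoid (s : seq R) :
  exists z, forall x, x \in s -> ~ pdvd 1 (z - x).
Proof.
case: R_witt => _ [_ [_ [_ [res_closed _]]]].
pose A : {poly R} := 'X * \prod_(x <- s) ('X - x%:P).
have monA : A \is monic by rewrite monicMl ?monicX // monic_prod_XsubC.
have szA : (1 < size A)%N.
  rewrite /A size_mul ?polyX_eq0 ?monic_neq0 ?monic_prod_XsubC // size_polyX /=.
  by rewrite ltnS lt0n size_poly_eq0 monic_neq0 // monic_prod_XsubC.
have sz1 : (size (1%R : {poly R}) < size A)%N by rewrite size_polyC oner_neq0.
have monA1 : A + 1 \is monic by rewrite monicE lead_coefDl // -monicE.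
have [z hz] := res_closed (A + 1) monA1 (leq_trans szA (eq_leq (esym (size_polyDl sz1)))).
exists z => x xs hx; apply: npdvd1_1.
have -> : (1 : R) = (A + 1).[z] - z * \prod_(y <- s) (z - y).
  by rewrite /A !hornerE horner_prod; under eq_bigr do rewrite !hornerE; ring.
by apply: pdvdB => //; apply/pdvdMl; rewrite (big_rem x xs) /=; apply: pdvdMr.
Qed.

Lemma poly_pdvd_coef_avoid n (q : {poly R}) (s : seq R) : (size q <= n)%N ->
  (forall z, (forall x, x \in s -> ~ pdvd 1 (z - x)) -> pdvd 1 q.[z]) ->
  forall i, pdvd 1 q`_i.
Proof.
elim: n q s => [|n IH] q s szq H i.
  by move: szq; rewrite leqn0 size_poly_eq0 => /eqP ->; rewrite coef0; apply: pdvd0.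
have [z0 hz0] := residue_avoid s.
have : root (q - (q.[z0])%:P) z0 by rewrite rootE !hornerE subrr.
case/factor_theorem => q1 hq1.
have szq1 : (size q1 <= n)%N.
  have [->|nz] := eqVneq q1 0; first by rewrite size_poly0.
  have := size_mul nz (monic_neq0 (monicXsubC z0)).
  rewrite size_XsubC addn2 /= -hq1 => e.
  have := size_polyD q (- (q.[z0])%:P); rewrite e size_polyN => hle.
  rewrite -ltnS; apply: (leq_trans hle); rewrite geq_max szq /= size_polyC.
  by case: (_ != 0).
have Hq1 z : (forall x, x \in z0 :: s -> ~ pdvd 1 (z - x)) -> pdvd 1 q1.[z].
  move=> hz; apply: (@pdvd1_prime (z - z0)); last by apply: hz; rewrite inE eqxx.
  have : (q - (q.[z0])%:P).[z] = q1.[z] * (z - z0) by rewrite hq1 !hornerE.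
  rewrite mulrC => <-; rewrite !hornerE; apply: pdvdB; last exact: H z0 hz0.
  by apply: H => x xs; apply: hz; rewrite inE xs orbT.
have -> : q = q1 * 'X - q1 * z0%:P + (q.[z0])%:P by rewrite -mulrBr -hq1 subrK.
rewrite coefD coefB coefMX coefMC coefC.
have hc := IH _ _ szq1 Hq1.
apply: pdvdD; last by case: (i == 0%N); [exact: H z0 hz0 | apply: pdvd0].
by apply: pdvdB; [case: (i == 0%N); [apply: pdvd0 | apply: hc] | apply: pdvdMr].
Qed.

Lemma poly_pdvd_coef (q : {poly R}) :
  (forall z, pdvd 1 q.[z]) -> forall i, pdvd 1 q`_i.
Proof. by move=> H; apply: (@poly_pdvd_coef_avoid (size q) q [::]). Qed.

Section Multivariate.
Variable n : nat.
Implicit Types (A Q : {mpoly R[n]}) (W : 'I_n -> R).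

Lemma mpoly_pdvd_coef_below J Q :
  vars_below J Q -> (forall W, pdvd 1 Q.@[W]) -> forall m, pdvd 1 Q@_m.
Proof.
elim: J Q => [|J IH] Q hv H m.
  have [hm|hm] := boolP (m \in msupp Q); last first.
    by rewrite (memN_msupp_eq0 hm); apply: pdvd0.
  by rewrite (vars_below0_supp hv hm) -(vars_below0_meval hv).
have [ltJn|lenJ] := ltnP J n; last first.
  apply: IH => // m' hm' i hi; exfalso; move: (ltn_ord i); rewrite ltnNge.
  by rewrite (leq_trans lenJ hi).
pose j := Ordinal ltJn.
rewrite -(mslice_coef Q j m); apply: IH; first exact: mslice_vars_below.
move=> W; pose D := maxn (msize Q) (m j).+1.
pose q : {poly R} := \poly_(d < D) (mslice j d Q).@[W].
have hq z : pdvd 1 q.[z].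
  rewrite horner_poly; have := H (fun i => if i == j then z else W i).
  rewrite (@mslice_meval _ _ Q j _ D (leq_maxl _ _)) eqxx.
  by congr (pdvd 1 _); apply: eq_bigr => d _; rewrite -mslice_meval_set.
by have := poly_pdvd_coef hq (m j); rewrite coef_poly leq_max ltnSn orbT.
Qed.

Lemma mpoly_pdvd_coef Q : (forall W, pdvd 1 Q.@[W]) -> forall m, pdvd 1 Q@_m.
Proof.
by apply: (@mpoly_pdvd_coef_below n) => m _ i; rewrite leqNgt ltn_ord.
Qed.

Lemma mpoly_pdvd_scale Q : (forall m, pdvd 1 Q@_m) -> exists Q', Q = P *: Q'.
Proof.
elim/mpolyind: Q => [|c m Q0 hm _ IH] H; first by exists 0; rewrite scaler0.
have [c' ->] : pdvd 1 c.
  by have := H m; rewrite mcoeffD mcoeffZ mcoeffX eqxx mulr1 (memN_msupp_eq0 hm) addr0.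
have [Q0' ->] : exists Q', Q0 = P *: Q'.
  apply: IH => m'; have [->|ne] := eqVneq m' m.
    by rewrite (memN_msupp_eq0 hm); apply: pdvd0.
  by have := H m'; rewrite mcoeffD mcoeffZ mcoeffX eq_sym (negbTE ne) mulr0 add0r.
by exists (c' *: 'X_[m] + Q0'); rewrite scalerDr scalerA expr1.
Qed.

Lemma supp_inZp G A : supp_in G (P *: A) -> supp_in G A.
Proof. by move=> hA m; rewrite -(perm_mem (msuppZ A p_neq0)); apply: hA. Qed.

Lemma mpoly_pdvd_coef_dense (S : ('I_n -> R) -> Prop) :
  (forall W, exists2 y, S y & forall i, pdvd 1 (y i - W i)) ->
  forall k Q, (forall y, S y -> pdvd k Q.@[y]) -> forall m, pdvd k Q@_m.
Proof.
move=> dense; elim=> [|k IH] Q H m; first exact: pdvd_exp0.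
have [Q' eQ] : exists Q', Q = P *: Q'.
  apply/mpoly_pdvd_scale/mpoly_pdvd_coef => W; have [y Sy hy] := dense W.
  have := pdvdB (pdvd_leq (ltn0Sn k) (H y Sy)) (eqmod_meval Q hy).
  by rewrite opprB addrC subrK.
rewrite eQ mcoeffZ -add1n; apply: pdvdM; first exact: pdvd_p.
by apply: IH => y Sy; apply: pdvd_cancel1; have := H y Sy; rewrite eQ mevalZ.
Qed.

Lemma mpoly_pdvd_coef_all k Q : (forall W, pdvd k Q.@[W]) -> forall m, pdvd k Q@_m.
Proof.
move=> H; apply: (@mpoly_pdvd_coef_dense (fun _ => True)) => [W|y _]; last exact: H.
by exists W => // i; rewrite subrr; apply: pdvd0.
Qed.

Definition mhomog (e : nat) A : {mpoly R[n]} :=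
  \sum_(m <- msupp A | mdeg m == e) A@_m *: 'X_[m].

Lemma mcoeff_mhomog e A m : mdeg m = e -> (mhomog e A)@_m = A@_m.
Proof.
move=> hme; rewrite /mhomog mcoeff_sumX; have [hm|hm] := boolP (m \in msupp A).
  rewrite big_mkcond (bigD1_seq m) //= hme !eqxx /= big1 ?addr0 // => m' hne.
  by case: ifP => // /andP [_ /eqP e']; move: hne; rewrite e' eqxx.
rewrite (memN_msupp_eq0 hm) big1_seq // => m' /andP [/andP [_ /eqP e'] hm'].
by move: hm; rewrite -e' hm'.
Qed.

(* Scaling the variables by [p ^ s] separates the homogeneous components of
   [A] by their [p]-adic order. *)
Lemma mpoly_homog_pdvd A s e k :
  (k <= s)%N ->
  (forall m, (mdeg m < e)%N -> pdvd (s * e + k) A@_m) ->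
  (forall W, exists2 u, forall i, pdvd k (u i - W i) &
                        pdvd (s * e + k) A.@[fun i => P ^+ s * u i]) ->
  forall m, mdeg m = e -> pdvd k A@_m.
Proof.
move=> leks Alow Hval m hme; rewrite -(mcoeff_mhomog A hme).
apply: mpoly_pdvd_coef_all => W; have [u huW hu] := Hval W.
suff hAu : pdvd k (mhomog e A).@[u].
  by have := pdvdB hAu (eqmod_meval (mhomog e A) huW); rewrite opprB addrC subrK.
pose t m := A@_m * \prod_i (P ^+ s * u i) ^+ m i.
have t_low : pdvd (s * e + k) (\sum_(m <- msupp A | (mdeg m < e)%N) t m).
  by apply: pdvd_sum => m' hm'; apply/pdvdMr/Alow.
have t_high : pdvd (s * e + k)
    (\sum_(m <- msupp A | ~~ (mdeg m < e)%N && (mdeg m != e)) t m).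
  apply: pdvd_sum => m' /andP [hm1 hm2]; apply: pdvdMl; rewrite prod_expM.
  apply: pdvd_expMl; rewrite -[X in (X <= _)%N]/(s * e + k)%N.
  have : (e.+1 <= mdeg m')%N by rewrite ltn_neqAle eq_sym hm2 leqNgt hm1.
  by move=> hd; apply: (leq_trans _ (leq_mul (leqnn s) hd)); rewrite mulnS addnC leq_add2r.
have t_homog : \sum_(m <- msupp A | ~~ (mdeg m < e)%N && (mdeg m == e)) t m =
    P ^+ (s * e) * (mhomog e A).@[u].
  rewrite /mhomog raddf_sum /= mulr_sumr; apply: eq_big.
    by move=> m'; case: eqP => [->|]; rewrite ?ltnn ?andbT ?andbF.
  by move=> m' /andP [_ /eqP <-]; rewrite mevalZ mevalX /t prod_expM mulrCA.
apply: (@pdvd_cancel (s * e)); rewrite -t_homog.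
move: hu; rewrite mevalE (bigID (fun m => mdeg m < e)%N) /=.
rewrite [X in _ + X](bigID (fun m => mdeg m == e)) /= -/t => h.
have := pdvdB (pdvdB h t_low) t_high.
by have -> : forall a b c : R, a + (b + c) - a - c = b by move=> *; ring.
Qed.

End Multivariate.

End CompleteDVR.

Section EvalTo.
Variables (p : nat) (R : idomainType) (r m : nat) (f : monom r m -> R).
Local Notation pdvd := (@in_pow_ideal R p).

Lemma big_mem_uniq (T : eqType) (t u : seq T) (F : T -> R) : uniq t -> uniq u ->
  {subset u <= t} -> \sum_(x <- t | x \in u) F x = \sum_(x <- u) F x.
Proof.
move=> ut uu sub; rewrite -big_filter; apply/perm_big/uniq_perm => //.
  exact: filter_uniq.
by move=> x; rewrite mem_filter; apply/andP/idP => [[]//|h]; split => //; apply: sub.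
Qed.

Lemma eval_to_trunc u y v k : uniq u -> (forall al, al \notin u -> pdvd k (f al)) ->
  eval_to p f y v -> pdvd k (v - \sum_(al <- u) f al * monom_eval al y).
Proof.
move=> uu hu /(_ k) [s0 hs0]; pose t := undup (s0 ++ u).
have sub_s0 : {subset s0 <= t} by move=> x hx; rewrite mem_undup mem_cat hx.
have := hs0 t (undup_uniq _) sub_s0.
rewrite (bigID (fun al => al \in u)) /= big_mem_uniq //; last first.
- by move=> x; rewrite mem_undup mem_cat => ->; rewrite orbT.
- exact: undup_uniq.
have rest : pdvd k (\sum_(al <- t | al \notin u) f al * monom_eval al y).
  by apply: pdvd_sum => al hal; apply/pdvdMr/hu.
by move=> h; have := pdvdD h rest; rewrite opprD addrA subrK.
Qed.

Lemma eval_to_of_trunc y v :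
  (forall k, exists2 u, uniq u /\ (forall al, al \notin u -> pdvd k (f al)) &
     pdvd k (v - \sum_(al <- u) f al * monom_eval al y)) ->
  eval_to p f y v.
Proof.
move=> H k; have [u [uu hu] hv] := H k; exists u => t ut sub.
rewrite (bigID (fun al => al \in u)) /= big_mem_uniq // opprD addrA.
by apply: pdvdB => //; apply: pdvd_sum => al hal; apply/pdvdMr/hu.
Qed.

End EvalTo.

Section Delta.
Variables (p : nat) (R : idomainType) (phi : {rmorphism R -> R}) (delta : R -> R).
Hypotheses (p_pr : prime p) (R_witt : witt_ring p R).
Hypotheses (phi_frob : frob_lift p phi) (deltaE : is_delta p phi delta).

Local Notation pdvd := (@in_pow_ideal R p).
Local Notation P := (p%:R : R).

Lemma delta_shift s x u : (0 < s)%N ->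
  exists w, delta (x + P ^+ s * u) = delta x + P ^+ s.-1 * (u ^+ p + P * w).
Proof.
case: s => // s _ /=.
set D := delta (x + P ^+ s.+1 * u) - delta x - P ^+ s * u ^+ p.
have eD : P * D = P ^+ s.+1 * (P * delta u) - ((x + P ^+ s.+1 * u) ^+ p - x ^+ p).
  have h1 := deltaE (x + P ^+ s.+1 * u); have h2 := deltaE x; have h3 := deltaE u.
  rewrite rmorphD rmorphM rmorphXn rmorph_nat in h1.
  by rewrite /D !mulrBr h1 h2 h3 exprS; ring.
have : pdvd s.+2 (P * D).
  rewrite eD; apply: pdvdB; last exact: pdvd_binomp.
  by rewrite mulrA -exprSr; apply: pdvd_expM.
move/(pdvd_cancel1 R_witt) => [c hc]; exists c.
by rewrite mulrDr mulrA -exprSr -hc /D; ring.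
Qed.

Lemma iter_delta_shift j x u i : (i <= j)%N ->
  exists w, iter i delta (x + P ^+ j * u) =
            iter i delta x + P ^+ (j - i) * (u ^+ (p ^ i) + P * w).
Proof.
elim: i => [|i IH] leij; first by exists 0; rewrite /= subn0 expn0 expr1 mulr0 addr0.
have [w hw] := IH (ltnW leij).
have [w' hw'] := delta_shift (iter i delta x) (u ^+ (p ^ i) + P * w) (etrans (subn_gt0 _ _) leij).
have [c hc] : pdvd 1 ((u ^+ (p ^ i) + P ^+ 1 * w) ^+ p - (u ^+ (p ^ i)) ^+ p).
  exact: pdvd_binom.
exists (c + w'); rewrite /= hw hw' -subnS; congr (_ + _ * _).
rewrite expr1 in hc; rewrite mulrDr addrA -[X in X + _ = _](subrK ((u ^+ (p ^ i)) ^+ p)).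
by rewrite hc -exprM -expnSr; ring.
Qed.

(* Correct [delta ^ J] modulo [p] by adding [p ^ J e], which leaves the lower
   [delta ^ j] unchanged mod [p] and shifts [delta ^ J] by [e ^ (p ^ J)]. *)
Lemma jet_surj_mod_p (y : nat -> R) J :
  exists c, forall j, (j <= J)%N -> pdvd 1 (iter j delta c - y j).
Proof.
elim: J => [|J [c hc]].
  by exists (y 0%N) => j; rewrite leqn0 => /eqP ->; rewrite subrr; apply: pdvd0.
have pJ_gt0 : (0 < p ^ J.+1)%N by rewrite expn_gt0 prime_gt0.
have [e he] := residue_root R_witt (y J.+1 - iter J.+1 delta c) pJ_gt0.
exists (c + P ^+ J.+1 * e) => j lejJ; have [w hw] := iter_delta_shift c e lejJ.
rewrite hw; have [ltjJ|leJj] := ltnP j J.+1.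
  rewrite addrAC; apply: pdvdD; first exact: hc.
  by apply: pdvd_expMl; rewrite subn_gt0.
have -> : j = J.+1 by apply/eqP; rewrite eqn_leq lejJ leJj.
rewrite subnn expr0 mul1r.
have -> : iter J.+1 delta c + (e ^+ (p ^ J.+1) + P * w) - y J.+1 =
   (e ^+ (p ^ J.+1) - (y J.+1 - iter J.+1 delta c)) + P * w by ring.
by apply: pdvdD => //; apply/pdvdMr/pdvd_p.
Qed.

Section JetVariables.
Variables (r M : nat).

Definition jvar := ('I_r.+1 * 'I_M)%type.
Definition njvar := #|{: jvar}|.
Definition level (k : 'I_njvar) : nat := (enum_val k).1.
Definition coord (k : 'I_njvar) : 'I_M := (enum_val k).2.
(* At the top level [r], [inord] wraps around to level [0]. *)
Definition vshift (v : jvar) : jvar := (inord v.1.+1, v.2).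
Definition kshift (k : 'I_njvar) : 'I_njvar := enum_rank (vshift (enum_val k)).
Definition jetv (c : 'I_M -> R) (k : 'I_njvar) : R := iter (level k) delta (c (coord k)).

(* [X ^ p + p X'] evaluates to [phi x] at [(x, delta x)]. *)
Definition frob_subst : njvar.-tuple {mpoly R[njvar]} :=
  [tuple ('X_i ^+ p + P *: 'X_(kshift i)) | i < njvar].

Lemma level_le k : (level k <= r)%N.
Proof. by rewrite /level -ltnS. Qed.

Lemma level_rank (v : jvar) : level (enum_rank v) = v.1.
Proof. by rewrite /level enum_rankK. Qed.

Lemma coord_rank (v : jvar) : coord (enum_rank v) = v.2.
Proof. by rewrite /coord enum_rankK. Qed.

Lemma jetv_rank c (v : jvar) : jetv c (enum_rank v) = iter v.1 delta (c v.2).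
Proof. by rewrite /jetv level_rank coord_rank. Qed.

Lemma vshift_level (v : jvar) : (v.1 < r)%N -> nat_of_ord (vshift v).1 = v.1.+1.
Proof. by move=> h; rewrite /vshift /= inordK. Qed.

Lemma kshift_rank (v : jvar) : kshift (enum_rank v) = enum_rank (vshift v).
Proof. by rewrite /kshift enum_rankK. Qed.

Lemma level_kshift k :
  (level k < r)%N -> level (kshift k) = (level k).+1 /\ coord (kshift k) = coord k.
Proof. by move=> h; rewrite /level /coord /kshift enum_rankK /vshift /= inordK. Qed.

Lemma frob_subst_jetv c k :
  (level k < r)%N -> (tnth frob_subst k).@[jetv c] = phi (jetv c k).
Proof.
move=> h; rewrite tnth_mktuple mevalD mevalZ rmorphXn /= !mevalXU.
rewrite /jetv; have [-> ->] := level_kshift h.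
by rewrite iterS deltaE subrKC.
Qed.

Definition level_below J : {mpoly R[njvar]} -> Prop :=
  supp_in (fun m : 'X_{1..njvar} => forall i, (J <= level i)%N -> m i = 0%N).

Lemma level_belowM J A B : level_below J A -> level_below J B -> level_below J (A * B).
Proof. by apply: supp_inM => x y hx hy i hi; rewrite mnmDE hx ?hy. Qed.

Lemma level_belowC J c : level_below J c%:MP.
Proof. by apply: supp_inC => i _; rewrite mnm0E. Qed.

Lemma level_below1 J : level_below J 1.
Proof. by rewrite -mpolyC1; apply: level_belowC. Qed.

Lemma level_belowXU J k : (level k < J)%N -> level_below J 'X_k.
Proof.
move=> h; apply: supp_inX => i hi; rewrite mnm1E; case: eqP => // e.
by move: h; rewrite e ltnNge hi.
Qed.

Lemma level_belowX J A e : level_below J A -> level_below J (A ^+ e).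
Proof.
move=> h; elim: e => [|e IH]; first by rewrite expr0; apply: level_below1.
by rewrite exprS; apply: level_belowM.
Qed.

Lemma level_below_prod J (I : Type) (s : seq I) (F : I -> {mpoly R[njvar]}) :
  (forall i, level_below J (F i)) -> level_below J (\prod_(i <- s) F i).
Proof.
move=> H; apply: (big_ind (level_below J)) => //.
  exact: level_below1.
exact: level_belowM.
Qed.

Lemma level_below_leq J J' A : (J <= J')%N -> level_below J A -> level_below J' A.
Proof. by move=> h hA m /hA hm i hi; apply: hm; apply: leq_trans hi. Qed.

Lemma level_below_comp J J' A (U : njvar.-tuple {mpoly R[njvar]}) :
  level_below J A -> (forall k, (level k < J)%N -> level_below J' (tnth U k)) ->
  level_below J' (A \mPo U).
Proof.
move=> hA hU; rewrite comp_mpolyEX; apply: supp_in_sum => m.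
have [hm|hm] := boolP (m \in msupp A); last first.
  by rewrite (memN_msupp_eq0 hm) scale0r; apply: supp_in0.
apply: supp_inZ; rewrite comp_mpolyX; apply: level_below_prod => i.
have [hi|hi] := ltnP (level i) J; first exact/level_belowX/hU.
by rewrite (hA _ hm i hi) expr0; apply: level_below1.
Qed.

Lemma level_below_meval J A (y y' : 'I_njvar -> R) :
  level_below J A -> (forall k, (level k < J)%N -> y k = y' k) -> A.@[y] = A.@[y'].
Proof.
move=> hA hy; rewrite !mevalE; apply: eq_big_seq => m hm; congr (_ * _).
apply: eq_bigr => i _; have [hi|hi] := ltnP (level i) J; first by rewrite hy.
by rewrite (hA _ hm i hi) !expr0.
Qed.

Lemma phi_meval (A : {mpoly R[njvar]}) (y : 'I_njvar -> R) :
  phi (A.@[y]) = (map_mpoly phi A).@[fun k => phi (y k)].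
Proof.
elim/mpolyind: A => [|c m Q0 _ _ IH].
  by rewrite meval0 rmorph0 (rmorph0 (map_mpoly phi)) meval0.
rewrite !rmorphD /= ?mevalD -IH map_mpolyZ map_mpolyX !mevalZ !mevalX.
by rewrite rmorphM rmorph_prod; under eq_bigr do rewrite rmorphXn.
Qed.

Local Notation pdvdm := (@in_pow_ideal {mpoly R[njvar]} p).

Definition frob_defect (Q : {mpoly R[njvar]}) := map_mpoly phi Q \mPo frob_subst - Q ^+ p.

Lemma pdvdmZ k (c : R) (A : {mpoly R[njvar]}) : pdvdm k A -> pdvdm k (c *: A).
Proof. by move=> h; rewrite -mul_mpolyC; apply: pdvdMl. Qed.

Lemma pdvdmZl (c : R) (A : {mpoly R[njvar]}) : pdvd 1 c -> pdvdm 1 (c *: A).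
Proof.
case=> w ->; rewrite expr1 -scalerA scaler_nat -mulr_natl.
exact/pdvdMr/pdvd_p.
Qed.

Lemma frob_defectD A B : frob_defect (A + B) =
  frob_defect A + frob_defect B - ((A + B) ^+ p - A ^+ p - B ^+ p).
Proof. by rewrite /frob_defect rmorphD comp_mpolyD; ring. Qed.

Lemma frob_defect_pdvd Q : pdvdm 1 (frob_defect Q).
Proof.
elim/mpolyind: Q => [|c m Q0 _ _ IH].
  rewrite /frob_defect rmorph0 comp_mpoly0 expr0n /= gtn_eqF ?prime_gt0 // subrr.
  exact: pdvd0.
rewrite frob_defectD; apply: pdvdB; last exact: pdvd_frobD.
apply: pdvdD => //.
rewrite /frob_defect map_mpolyZ map_mpolyX comp_mpolyZ comp_mpolyX exprZn.
rewrite (@mpolyXE_id _ R m) -prodrXl.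
under [X in _ - _ *: X]eq_bigr do rewrite exprAC.
rewrite -[X in X - _](subrK (c ^+ p *: \prod_(i < njvar) tnth frob_subst i ^+ m i)).
rewrite -scalerBl -addrA -scalerBr; apply: pdvdD; first exact/pdvdmZl/phi_frob.
apply/pdvdmZ/eqmod_prod => i; apply: eqmodX.
rewrite tnth_mktuple addrAC subrr add0r scaler_nat -mulr_natl.
exact/pdvdMr/pdvd_p.
Qed.

Lemma frob_defect_div Q : exists Q', frob_defect Q = P *: Q'.
Proof.
have [c] := frob_defect_pdvd Q; rewrite expr1 => ->.
by exists c; rewrite mulr_natl scaler_nat.
Qed.

Lemma frob_defect_meval J T T' c : (J <= r)%N -> level_below J T ->
  frob_defect T = P *: T' -> T'.@[jetv c] = delta T.@[jetv c].
Proof.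
move=> leJr hT eT'; apply: (mulfI (p_neq0 R_witt)).
have := congr1 (meval (jetv c)) eT'; rewrite mevalZ => <-.
rewrite /frob_defect mevalB rmorphXn /= comp_mpoly_meval deltaE phi_meval.
congr (_ - _); apply: (@level_below_meval J); first exact: supp_in_map.
by move=> k hk; rewrite frob_subst_jetv //; apply: leq_trans hk leJr.
Qed.

Lemma frob_defect_level_below J T T' : (J < r)%N -> level_below J.+1 T ->
  frob_defect T = P *: T' -> level_below J.+2 T'.
Proof.
move=> ltJr hT eT'; apply: (supp_inZp R_witt); rewrite -eT'; apply: supp_inB.
  apply: (@level_below_comp J.+1); first exact: supp_in_map.
  move=> k hk; rewrite tnth_mktuple.
  apply: supp_inD; first by apply/level_belowX/level_belowXU/(leq_trans hk).
  apply: supp_inZ; apply: level_belowXU; rewrite ltnS in hk.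
  by have [-> _] := level_kshift (leq_ltn_trans hk ltJr).
by apply/level_belowX/(level_below_leq _ hT).
Qed.

Definition linf (s : seq ('I_njvar * R)) : {mpoly R[njvar]} :=
  \sum_(x <- s) x.2 *: 'X_(x.1).

Lemma linf_meval s y : (linf s).@[y] = \sum_(x <- s) x.2 * y x.1.
Proof. by rewrite /linf raddf_sum /=; apply: eq_bigr => x _; rewrite mevalZ mevalXU. Qed.

Lemma linf_mevalZ s a y : (linf s).@[fun k => a * y k] = a * (linf s).@[y].
Proof. by rewrite !linf_meval mulr_sumr; apply: eq_bigr => x _; rewrite mulrCA. Qed.

Lemma linf_map s : map_mpoly phi (linf s) = linf [seq (x.1, phi x.2) | x <- s].
Proof.
rewrite /linf rmorph_sum big_map /=; apply: eq_bigr => x _.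
by rewrite map_mpolyZ map_mpolyX.
Qed.

Lemma linf_cat s1 s2 : linf (s1 ++ s2) = linf s1 + linf s2.
Proof. by rewrite /linf big_cat. Qed.

Lemma linfZ a s : a *: linf s = linf [seq (x.1, a * x.2) | x <- s].
Proof.
by rewrite /linf scaler_sumr big_map; apply: eq_bigr => x _; rewrite scalerA.
Qed.

Lemma linf_frob_subst s : linf s \mPo frob_subst =
  \sum_(x <- s) x.2 *: 'X_(x.1) ^+ p + P *: linf [seq (kshift x.1, x.2) | x <- s].
Proof.
rewrite /linf raddf_sum big_map scaler_sumr -big_split /=; apply: eq_bigr => x _.
rewrite comp_mpolyZ comp_mpolyXU -tnth_nth tnth_mktuple.
by rewrite scalerDr scalerA mulrC -scalerA.
Qed.

Lemma linf_mdeg_ge s : mdeg_ge 1 (linf s).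
Proof. by apply: supp_in_sum => x; apply: supp_inZ; apply: mdeg_geXU. Qed.

Lemma linf_level_below J s :
  (forall x, x \in s -> (level x.1 < J)%N) -> level_below J (linf s).
Proof.
move=> h; rewrite /linf big_seq; apply: (big_ind (level_below J)).
- exact: supp_in0.
- exact: supp_inD.
- by move=> x hx; apply: supp_inZ; apply/level_belowXU/h.
Qed.

Lemma mdeg_geXp k : mdeg_ge 2 (('X_k : {mpoly R[njvar]}) ^+ p).
Proof.
apply: (mdeg_ge_leq (prime_gt1 p_pr)).
by have := mdeg_geX (e := p) (@mdeg_geXU _ _ k); rewrite mul1n.
Qed.

Lemma mdeg_ge_frob_subst d A : mdeg_ge d A -> mdeg_ge d (map_mpoly phi A \mPo frob_subst).
Proof.
move=> hA; apply: mdeg_ge_comp; first exact: supp_in_map.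
move=> k; rewrite tnth_mktuple; apply: supp_inD; first by apply: (mdeg_ge_leq (isT : 1 <= 2)%N); apply: mdeg_geXp.
by apply: supp_inZ; apply: mdeg_geXU.
Qed.

Definition jet_affine N (C : R) (k : 'I_njvar) (s : seq ('I_njvar * R))
    (H : {mpoly R[njvar]}) :=
  C%:MP + P ^+ N *: ('X_k + linf s) + H.

Lemma map_frob_subst_jet_affine N C k s H :
  (map_mpoly phi (jet_affine N C k s H) \mPo frob_subst) =
  (phi C)%:MP + P ^+ N *: ('X_k ^+ p + P *: 'X_(kshift k) +
     (\sum_(x <- s) phi x.2 *: 'X_(x.1) ^+ p +
      P *: linf [seq (kshift x.1, x.2) | x <- [seq (x.1, phi x.2) | x <- s]])) +
  (map_mpoly phi H \mPo frob_subst).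
Proof.
rewrite /jet_affine -addrA !rmorphD /= map_mpolyC map_mpolyZ rmorphD /= map_mpolyX.
rewrite linf_map rmorphXn rmorph_nat comp_mpolyC comp_mpolyZ comp_mpolyD comp_mpolyXU.
by rewrite linf_frob_subst big_map -tnth_nth tnth_mktuple addrA.
Qed.

(* Modulo terms of degree [>= 2], [T' = frob_defect T / p] is again affine, with
   constant [delta C] and linear part [p^N (X_k' + L'^phi - C^(p-1) (X_k + L))],
   where ['] moves a variable one level up. *)
Lemma frob_defect_jet_affine N C k s H T' :
  (forall x, x \in s -> (level x.1 < level k)%N) -> (level k < r)%N -> mdeg_ge 2 H ->
  frob_defect (jet_affine N C k s H) = P *: T' ->
  exists s' H', [/\ T' = jet_affine N (delta C) (kshift k) s' H',
                    (forall x, x \in s' -> (level x.1 <= level k)%N) & mdeg_ge 2 H'].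
Proof.
move=> hs ltkr hH eT'.
pose W := P ^+ N *: ('X_k + linf s) + H.
pose c1 := C ^+ p.-1 *+ p.
pose s2 := [seq (kshift x.1, x.2) | x <- [seq (x.1, phi x.2) | x <- s]].
pose s' := s2 ++ [seq (x.1, - C ^+ p.-1 * x.2) | x <- (k, 1) :: s].
pose Tgt := (delta C)%:MP + P ^+ N *: ('X_(kshift k) + linf s').
exists s', (T' - Tgt); split; first by rewrite /jet_affine addrC subrK.
  move=> x; rewrite mem_cat => /orP [].
    rewrite /s2 -map_comp => /mapP [y hy ->] /=; have hly := hs y hy.
    by have [-> _] := level_kshift (ltn_trans hly ltkr).
  move=> /mapP [y hy ->] /=; move: hy; rewrite inE => /orP [/eqP -> //|hy].
  exact/ltnW/hs.
pose mH := map_mpoly phi H \mPo frob_subst.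
pose Sx := \sum_(x <- s) phi x.2 *: ('X_(x.1) : {mpoly R[njvar]}) ^+ p.
pose E := (C%:MP + W) ^+ p - (C ^+ p)%:MP - c1%:MP * W.
have eT : jet_affine N C k s H = C%:MP + W by rewrite /jet_affine /W addrA.
have eP : jet_affine N C k s H ^+ p = (C ^+ p)%:MP + c1%:MP * W + E.
  by rewrite eT /E; set X := (_ + W) ^+ p; ring.
have ephi : phi C = C ^+ p + P * delta C by rewrite deltaE addrC subrK.
have eD : frob_defect (jet_affine N C k s H) - P *: Tgt =
    P ^+ N *: ('X_k ^+ p + Sx) + mH - c1%:MP * H - E.
  rewrite /frob_defect map_frob_subst_jet_affine eP /Tgt /s' /Sx /mH /s2.
  rewrite linf_cat -linfZ /linf big_cons -/(linf s).
  rewrite scale1r ephi /W /c1 -!mul_mpolyC !rmorphD !rmorphM /= !rmorphN /= !rmorphMn.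
  by rewrite /= ?mpolyC1 -(mulr_natr ((C ^+ p.-1)%:MP)); ring.
apply: (supp_inZp R_witt); rewrite scalerBr -eT' eD.
apply: supp_inB; last first.
  apply: mdeg_ge_binom; apply: supp_inD; last exact: mdeg_ge_leq hH.
  by apply: supp_inZ; apply: supp_inD; [exact: mdeg_geXU | exact: linf_mdeg_ge].
apply: supp_inB; last by rewrite -[2%N]/(0 + 2)%N; apply: mdeg_geM.
apply: supp_inD; last exact: mdeg_ge_frob_subst.
apply: supp_inZ; apply: supp_inD; first exact: mdeg_geXp.
by apply: supp_in_sum => x; apply: supp_inZ; apply: mdeg_geXp.
Qed.

Lemma jetv_dense (W : 'I_njvar -> R) : exists c, forall k, pdvd 1 (jetv c k - W k).
Proof.
have : forall i : 'I_M, exists ci : R, forall j, (j <= r)%N ->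
    pdvd 1 (iter j delta ci - W (enum_rank ((inord j : 'I_r.+1), i))).
  by move=> i; apply: jet_surj_mod_p.
case/fin_all_exists => c hc; exists c => k.
have := hc (coord k) (level k) (level_le k).
by rewrite /jetv /level /coord inord_val -surjective_pairing enum_valK.
Qed.

Lemma jetv_pdvd_meval K (A : {mpoly R[njvar]}) :
  (forall c, pdvd K A.@[jetv c]) -> forall Y, pdvd K A.@[Y].
Proof.
move=> hA Y; rewrite mevalE; apply: pdvd_sum_seq => m _; apply: pdvdMr.
apply: (@mpoly_pdvd_coef_dense _ _ R_witt _ (fun y => exists c, y = jetv c)).
  by move=> W; have [c hc] := jetv_dense W; exists (jetv c) => //; exists c.
by move=> y [c ->]; apply: hA.
Qed.

Section Ball.
Variables (N : nat) (b : 'I_M -> R).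

Definition ball_jet_poly (v : jvar) (T : {mpoly R[njvar]}) : Prop :=
  [/\ forall c, T.@[jetv c] = iter v.1 delta (b v.2 + P ^+ N * c v.2),
      level_below v.1.+1 T &
      exists s H, [/\ T = jet_affine N (iter v.1 delta (b v.2)) (enum_rank v) s H,
                      forall x, x \in s -> (level x.1 < v.1)%N & mdeg_ge 2 H]].

Lemma ball_jet_poly0 (v : jvar) : nat_of_ord v.1 = 0%N ->
  ball_jet_poly v (jet_affine N (b v.2) (enum_rank v) [::] 0).
Proof.
move=> v0; rewrite /jet_affine /linf big_nil !addr0; split.
- by move=> c; rewrite mevalD mevalC mevalZ mevalXU jetv_rank v0.
- apply: supp_inD; first exact: level_belowC.
  by apply: supp_inZ; apply: level_belowXU; rewrite level_rank v0.
- exists [::], 0; split => //; last exact: supp_in0.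
  by rewrite v0 /jet_affine /linf big_nil !addr0.
Qed.

Lemma ball_jet_polyS (v : jvar) T :
  (v.1 < r)%N -> ball_jet_poly v T -> exists T', ball_jet_poly (vshift v) T'.
Proof.
move=> ltvr [hE hL [s [H [eT hs hH]]]].
have [T' eT'] := frob_defect_div T.
have lv := vshift_level ltvr; exists T'; split.
- by move=> c; rewrite lv (frob_defect_meval _ ltvr hL eT') hE.
- by rewrite lv; exact: frob_defect_level_below ltvr hL eT'.
have hs' x : x \in s -> (level x.1 < level (enum_rank v))%N by rewrite level_rank; apply: hs.
rewrite eT in eT'; have ltkr : (level (enum_rank v) < r)%N by rewrite level_rank.
have [s' [H' [-> hs'' hH']]] := frob_defect_jet_affine hs' ltkr hH eT'.
exists s', H'; split => //; first by rewrite lv kshift_rank.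
by rewrite lv => x /hs''; rewrite level_rank.
Qed.

Lemma ball_jet_poly_exists (v : jvar) : exists T, ball_jet_poly v T.
Proof.
move: {2}(nat_of_ord v.1) (erefl (nat_of_ord v.1)) => j.
elim: j v => [|j IH] v hv; first by eexists; apply: ball_jet_poly0.
have ltjr : (j < r)%N by rewrite -ltnS -hv.
pose u : jvar := (inord j, v.2).
have hu : nat_of_ord u.1 = j by rewrite /= inordK // ltnW.
have [T hT] := IH u hu.
have [T' hT'] := ball_jet_polyS (leq_ltn_trans (eq_leq hu) ltjr) hT.
suff -> : v = vshift u by exists T'.
rewrite [LHS]surjective_pairing /vshift /=; congr (_, _); apply: val_inj => /=.
by rewrite hu inordK ?hv // ltnS.
Qed.

Definition jet_translate : njvar.-tuple {mpoly R[njvar]} :=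
  [tuple 'X_k + (jetv b k)%:MP | k < njvar].

Lemma jet_translate_meval A Y :
  (A \mPo jet_translate).@[Y] = A.@[fun k => Y k + jetv b k].
Proof.
rewrite comp_mpoly_meval; apply: meval_eq => k.
by rewrite tnth_mktuple mevalD mevalXU mevalC.
Qed.

Lemma jet_translate_mdeg_le (m : 'X_{1..njvar}) :
  mdeg_le (mdeg m) ('X_[m] \mPo jet_translate).
Proof.
rewrite comp_mpolyX mdegE; apply: mdeg_le_prod => i.
have := @mdeg_leX _ _ 1 (tnth jet_translate i) (m i); rewrite mul1n; apply.
rewrite tnth_mktuple; apply: supp_inD; first by apply: supp_inX; rewrite mdeg1.
by apply: supp_inC; rewrite mdeg0.
Qed.

Section Truncation.
Variable f : monom r M -> R.

Definition mnm_of_monom (al : monom r M) : 'X_{1..njvar} :=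
  [multinom al (enum_val i) | i < njvar].

Definition trunc_poly (s : seq (monom r M)) : {mpoly R[njvar]} :=
  \sum_(al <- s) f al *: 'X_[mnm_of_monom al].

Lemma trunc_poly_meval s (y : jvar -> R) :
  (trunc_poly s).@[fun k => y (enum_val k)] = \sum_(al <- s) f al * monom_eval al y.
Proof.
rewrite /trunc_poly raddf_sum /=; apply: eq_bigr => al _.
rewrite mevalZ mevalX; congr (_ * _).
rewrite /monom_eval [RHS](reindex (@enum_val _ {: jvar})) /=.
  by apply: eq_bigr => i _; rewrite mnmE.
by exists enum_rank => x _; [apply: enum_valK | apply: enum_rankK].
Qed.

Lemma trunc_poly_translate_coef s u k m :
  (forall al, al \notin u -> pdvd k (f al)) ->
  (\max_(al <- u) (mdeg (mnm_of_monom al)).+1 <= mdeg m)%N ->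
  pdvd k ((trunc_poly s \mPo jet_translate)@_m).
Proof.
move=> hu leDm; rewrite /trunc_poly rmorph_sum /= raddf_sum /=.
apply: pdvd_sum_seq => al _; rewrite comp_mpolyZ mcoeffZ.
have [hal|hal] := boolP (al \in u); last exact/pdvdMr/hu.
rewrite memN_msupp_eq0 ?mulr0; first exact: pdvd0.
apply/negP => /jet_translate_mdeg_le lemal; move: leDm; apply/negP; rewrite -ltnNge.
by apply: (leq_ltn_trans lemal); rewrite (big_rem al hal) /= leq_max ltnSn.
Qed.

End Truncation.

Section Taylor.
Variables (Tf : 'I_njvar -> {mpoly R[njvar]}) (sL : 'I_njvar -> seq ('I_njvar * R)).
Variable HL : 'I_njvar -> {mpoly R[njvar]}.
Hypothesis Tf_meval : forall k c,
  (Tf k).@[jetv c] = jetv (fun i => b i + P ^+ N * c i) k.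
Hypothesis Tf_affine : forall k, Tf k = jet_affine N (jetv b k) k (sL k) (HL k).
Hypothesis sL_level : forall k x, x \in sL k -> (level x.1 < level k)%N.
Hypothesis HL_mdeg : forall k, mdeg_ge 2 (HL k).

Definition linpart (Z : 'I_njvar -> R) k := Z k + (linf (sL k)).@[Z].

(* [linpart] is unitriangular with respect to [level]. *)
Lemma linpart_surj (W : 'I_njvar -> R) : exists Z, forall k, linpart Z k = W k.
Proof.
suff : forall J, exists Z, forall k, (level k < J)%N -> linpart Z k = W k.
  by case/(_ r.+1) => Z hZ; exists Z => k; apply: hZ; rewrite ltnS level_le.
elim=> [|J [Z hZ]]; first by exists W.
pose Z' k := if level k == J then W k - (linf (sL k)).@[Z] else Z k.
have agree k : (level k < J)%N -> Z' k = Z k by move=> hk; rewrite /Z' ltn_eqF.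
have linZ' k : (level k <= J)%N -> (linf (sL k)).@[Z'] = (linf (sL k)).@[Z].
  move=> hk; apply: (@level_below_meval (level k)).
    by apply: linf_level_below => x; apply: sL_level.
  by move=> k' hk'; apply: agree; apply: leq_trans hk' hk.
exists Z' => k; rewrite ltnS leq_eqVlt => /orP [/eqP hk|hk].
  by rewrite /linpart linZ' ?hk // /Z' hk eqxx subrK.
by rewrite /linpart agree // linZ'; [exact: hZ | exact: ltnW].
Qed.

Definition ball_subst : njvar.-tuple {mpoly R[njvar]} := [tuple Tf k | k < njvar].

Lemma ball_subst_meval A Y : (A \mPo ball_subst).@[Y] = A.@[fun k => (Tf k).@[Y]].
Proof. by rewrite comp_mpoly_meval; apply: meval_eq => k; rewrite tnth_mktuple. Qed.

Lemma ball_subst_near0 t Z k : (N <= t)%N -> exists w,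
  (Tf k).@[fun i => P ^+ t * Z i] =
    jetv b k + P ^+ (N + t) * (linpart Z k + P ^+ (t - N) * w).
Proof.
move=> leNt; have [w hw] := mdeg_ge_meval p t Z (@HL_mdeg k).
exists w; rewrite Tf_affine /jet_affine !mevalD mevalC mevalZ mevalD mevalXU.
rewrite linf_mevalZ hw /linpart.
have -> : (t * 2 = (N + t) + (t - N))%N by lia.
by rewrite !exprD; ring.
Qed.

(* Substituting [p^(N+k) Z] into the ball parametrisation isolates the Taylor
   coefficients of degree [e] of [Q K] at [jetv b], up to [p^k]. *)
Lemma taylor_coef_pdvd (Q : nat -> {mpoly R[njvar]}) :
  (forall K c, pdvd K ((Q K \mPo ball_subst).@[jetv c])) ->
  forall e k, exists K0, forall K, (K0 <= K)%N ->
    forall m, (mdeg m < e)%N -> pdvd k ((Q K \mPo jet_translate)@_m).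
Proof.
move=> hQ; elim=> [|e IH] k; first by exists 0%N => K _ m; rewrite ltn0.
pose s := (N + (N + k))%N; have [K0 hK0] := IH (s * e + k)%N.
exists (maxn K0 (s * e + k)) => K; rewrite geq_max => /andP [leK0 leK] m.
rewrite ltnS leq_eqVlt => /orP [/eqP hme|ltme]; last first.
  by apply: (pdvd_leq _ (hK0 K leK0 m ltme)); apply: leq_addl.
apply: (mpoly_homog_pdvd R_witt (s := s) (e := e) _ _ _ hme).
- by rewrite /s addnA leq_addl.
- by move=> m' ltm'; apply: hK0.
move=> W.
have [Z hZ] := linpart_surj W.
have /fin_all_exists [w hw] : forall kk, exists w,
    (Tf kk).@[fun i => P ^+ (N + k) * Z i] = jetv b kk + P ^+ s * (W kk + P ^+ k * w).
  move=> kk; have [w hw] := ball_subst_near0 Z kk (leq_addr k N).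
  by exists w; rewrite hw hZ addKn.
exists (fun kk => W kk + P ^+ k * w kk) => [kk|].
  by rewrite addrC addKr; apply: pdvd_expM.
apply: (pdvd_leq leK); rewrite jet_translate_meval.
have := jetv_pdvd_meval (hQ K) (fun i => P ^+ (N + k) * Z i).
rewrite ball_subst_meval; congr (pdvd K _); apply: meval_eq => kk.
by rewrite hw addrC.
Qed.

Lemma eval_to_jet_taylor f (sK : nat -> seq (monom r M)) :
  (forall K, uniq (sK K)) -> (forall K al, al \notin sK K -> pdvd K (f al)) ->
  (forall c, eval_to p f (jet delta (fun i => b i + P ^+ N * c i)) 0) ->
  forall a, eval_to p f (jet delta a) 0.
Proof.
move=> sK_uniq sK_trunc hball a; apply: eval_to_of_trunc => k.
have hQ K c : pdvd K ((trunc_poly f (sK K) \mPo ball_subst).@[jetv c]).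
  rewrite ball_subst_meval (meval_eq _ (fun kk => @Tf_meval kk c)).
  have := eval_to_trunc (sK_uniq K) (sK_trunc K) (hball c).
  by rewrite sub0r -trunc_poly_meval => /pdvdN; rewrite opprK.
pose D := (\max_(al <- sK k) (mdeg (mnm_of_monom al)).+1)%N.
have [K0 hK0] := taylor_coef_pdvd hQ D k; pose K := maxn K0 k.
exists (sK K); first split => // al hal.
  by apply: (pdvd_leq (leq_maxr K0 k)); apply: sK_trunc.

rewrite sub0r; apply: pdvdN; rewrite -trunc_poly_meval.
have -> : (trunc_poly f (sK K)).@[fun kk => jet delta a (enum_val kk)] =
    (trunc_poly f (sK K) \mPo jet_translate).@[fun kk => jetv a kk - jetv b kk].
  by rewrite jet_translate_meval; apply: meval_eq => kk; rewrite subrK.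
rewrite mevalE; apply: pdvd_sum_seq => m _; apply: pdvdMr.
have [ltmD|leDm] := ltnP (mdeg m) D; first exact: hK0 (leq_maxl _ _) _ ltmD.
exact: (trunc_poly_translate_coef _ (sK_trunc k)).
Qed.

End Taylor.

Lemma ball_jet_family : exists Tf sL HL,
  [/\ forall k c, (Tf k).@[jetv c] = jetv (fun i => b i + P ^+ N * c i) k,
      forall k, Tf k = jet_affine N (jetv b k) k (sL k) (HL k),
      forall k x, x \in sL k -> (level x.1 < level k)%N &
      forall k, mdeg_ge 2 (HL k)].
Proof.
have /fin_all_exists [F hF] : forall k : 'I_njvar,
    exists F : {mpoly R[njvar]} * seq ('I_njvar * R) * {mpoly R[njvar]},
    [/\ forall c, F.1.1.@[jetv c] = jetv (fun i => b i + P ^+ N * c i) k,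
        F.1.1 = jet_affine N (jetv b k) k F.1.2 F.2,
        forall x, x \in F.1.2 -> (level x.1 < level k)%N & mdeg_ge 2 F.2].
  move=> k; have [T [hE _ [s [H [eT hs hH]]]]] := ball_jet_poly_exists (enum_val k).
  by exists (T, s, H); split => //=; rewrite eT enum_valK.
exists (fun k => (F k).1.1), (fun k => (F k).1.2), (fun k => (F k).2).
by split => k; case: (hF k).
Qed.

Lemma eval_to_jet_ball f (sK : nat -> seq (monom r M)) :
  (forall K, uniq (sK K)) -> (forall K al, al \notin sK K -> pdvd K (f al)) ->
  (forall c, eval_to p f (jet delta (fun i => b i + P ^+ N * c i)) 0) ->
  forall a, eval_to p f (jet delta a) 0.
Proof.
have [Tf [sL [HL [Tf_meval Tf_affine sL_level HL_mdeg]]]] := ball_jet_family.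
exact: (eval_to_jet_taylor Tf_meval Tf_affine sL_level HL_mdeg).
Qed.

End Ball.

End JetVariables.

End Delta.

Theorem lemma3p10 (p : nat) (R : idomainType)
  (phi : {rmorphism R -> R}) (delta : R -> R) (m r : nat)
  (f : monom r m -> R) (b : 'I_m -> R) (N : 'I_m -> nat) :
  prime p -> odd p -> witt_ring p R -> frob_lift p phi ->
  is_delta p phi delta -> restricted p f ->
  (forall a : 'I_m -> R, (forall i, in_pow_ideal p (N i) (a i - b i)) ->
     eval_to p f (jet delta a) 0) ->
  forall a : 'I_m -> R, eval_to p f (jet delta a) 0.
Proof.
move=> p_pr _ R_witt phi_frob deltaE f_restr hball.
have [sK sK_trunc] : exists sK : nat -> seq (monom r m),
    forall K al, al \notin sK K -> in_pow_ideal p K (f al).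
  exists (fun K => proj1_sig (constructive_indefinite_description _ (f_restr K))).
  by move=> K; exact: (proj2_sig (constructive_indefinite_description _ (f_restr K))).
apply: (eval_to_jet_ball p_pr R_witt phi_frob deltaE (N := \max_(i < m) N i) (b := b)
  (sK := fun K => undup (sK K))) => [K | K al | c].
- exact: undup_uniq.
- by rewrite mem_undup; apply: sK_trunc.
apply: hball => i; rewrite addrC addKr.
by apply: pdvd_expMl; apply: leq_bigmax_cond.
Qed.
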